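(* Let $G=(V,E)$ be a hypergraph, $k\ge2$ an integer, and $(Y_1,\dots,Y_p,W,Z)$ a partition of $V$ for some integer $p\ge 2k-2$. Then there exist distinct $i_1,\dots,i_{k-1}\in[p]$ such that \[2\,\mathrm{cost}\Bigl(Y_{i_1},\dots,Y_{i_{k-1}},V\setminus\textstyle\bigcup_{j=1}^{k-1}Y_{i_j}\Bigr)\le\mathrm{cost}(Y_1,\dots,Y_p,W,Z)+\alpha(Y_1,\dots,Y_p,W,Z)+\beta(Y_1,\dots,Y_p,Z).\]
   Context: A hypergraph $G=(V,E)$ has finite vertex set $V$ and finite multiset $E$ of hyperedges (subsets of $V$). For a partition of $V$ into non-empty parts, $\mathrm{cost}$ of the partition is the number of hyperedges meeting at least two parts. For a partition $(Y_1,\dots,Y_p,W,Z)$ of $V$: $\alpha(Y_1,\dots,Y_p,W,Z)$ is the number of hyperedges meeting $Z$ and meeting at least two of the sets $Y_1,\dots,Y_p,W$; $\beta(Y_1,\dots,Y_p,Z)$ is the number of hyperedges disjoint from $Z$ meeting at least two of $Y_1,\dots,Y_p$. *)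

From mathcomp Require Import all_boot.
Set Implicit Arguments. Unset Strict Implicit. Unset Printing Implicit Defensive.

(* A hypergraph on a finite vertex type V: a finite multiset (seq) of hyperedges. *)
Definition hypergraph (V : finType) := seq {set V}.

Section Hyp.
Variable V : finType.

Definition nmeet (e : {set V}) (P : seq {set V}) : nat :=
  count (fun X => e :&: X != set0) P.

Definition is_partition (P : seq {set V}) : Prop :=
  [/\ all (fun X => X != set0) P,
      (forall i j, i < j < size P -> [disjoint nth set0 P i & nth set0 P j])
    & \bigcup_(X <- P) X = [set: V]].

Definition cost (E : hypergraph V) (P : seq {set V}) : nat :=
  count (fun e => 1 < nmeet e P) E.

Definition alpha (E : hypergraph V) (Ys : seq {set V}) (W Z : {set V}) : nat :=
  count (fun e => (e :&: Z != set0) && (1 < nmeet e (rcons Ys W))) E.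

Definition beta (E : hypergraph V) (Ys : seq {set V}) (Z : {set V}) : nat :=
  count (fun e : {set V} => [disjoint e & Z] && (1 < nmeet e Ys)) E.

End Hyp.

From mathcomp Require Import all_boot zify.

Set Implicit Arguments.
Unset Strict Implicit.
Unset Printing Implicit Defensive.

(* An edge contributes 0, 1 or 2 to cost + alpha + beta; call it light if it
   contributes 1.  A light edge meets at most one Y_i.  Weight each Y_i by the
   number of light edges meeting it and keep k-1 parts carrying at most half
   of the total weight, hence at most half of the light edges.  An edge cut by
   the coarse partition contributes 2 unless it is light and meets a kept
   part, so twice the coarse cost is at most 2 #heavy + #light. *)

Lemma count_sum (T : Type) (a : pred T) (s : seq T) :
  count a s = \sum_(x <- s) a x.
Proof. by rewrite -sumn_count sumnE big_map. Qed.

(* Greedy: put a minimal element of A into S and discard one further element. *)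
Lemma exists_subset_half_sum (T : finType) (c : T -> nat) (m : nat) (A : {set T}) :
  2 * m <= #|A| ->
  exists S : {set T},
    [/\ S \subset A, #|S| = m & 2 * \sum_(i in S) c i <= \sum_(i in A) c i].
Proof.
elim: m A => [|m IHm] A leA; first by exists set0; rewrite sub0set cards0 big_set0.
have [x xA] : exists x, x \in A by apply/set0Pn; rewrite -card_gt0; lia.
have [i0 i0A' i0_min] := arg_minnP c xA.
have i0A : i0 \in A := i0A'.
have [i1 i1A] : exists i1, i1 \in A :\ i0.
  by apply/set0Pn; rewrite -card_gt0; move: leA; rewrite (cardsD1 i0) i0A; lia.
have leA' : 2 * m <= #|A :\ i0 :\ i1|.
  by move: leA; rewrite (cardsD1 i0) (cardsD1 i1 (A :\ i0)) i0A i1A; lia.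
have [S [subS cardS sumS]] := IHm _ leA'.
have i0S : i0 \notin S by apply/negP => /(subsetP subS); rewrite !inE eqxx andbF.
exists (i0 |: S); split.
- rewrite subUset sub1set i0A (subset_trans subS) //.
  exact: subset_trans (subD1set _ _) (subD1set _ _).
- by rewrite cardsU1 i0S cardS.
- rewrite big_setU1 //= (big_setD1 i0 i0A) (big_setD1 i1 i1A) /=.
  have le01 : c i0 <= c i1 by apply: i0_min; move: i1A; rewrite inE => /andP[].
  by rewrite mulnDr; lia.
Qed.

(* Contribution of an edge to cost + alpha + beta, from the number [a] of
   parts Y_i it meets and whether it meets W and Z. *)
Definition edge_weight (a : nat) (bW bZ : bool) : nat :=
  (1 < a + bW + bZ) + (bZ && (1 < a + bW)) + (~~ bZ && (1 < a)).

Section EdgeWeight.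
Variables (a : nat) (bW bZ : bool).
Local Notation w := (edge_weight a bW bZ).

Lemma edge_weight_split : w = (w == 1) + 2 * (w == 2).
Proof. by rewrite /edge_weight; case: bW bZ => [] []; lia. Qed.

Lemma light_edge_le1 : w == 1 -> a <= 1.
Proof. by rewrite /edge_weight; case: bW bZ => [] []; lia. Qed.

(* [aS] counts the chosen parts met and [m] whether the rest is met. *)
Lemma refined_crossing_le (aS : nat) (m : bool) :
  aS <= a -> (m -> [|| bW, bZ | aS < a]) ->
  (1 < aS + m) <= (w == 2) + (w == 1) * aS.
Proof. by rewrite /edge_weight; case: bW bZ m => [] [] [] /=; lia. Qed.

End EdgeWeight.

Definition meets (V : finType) (e X : {set V}) : bool := e :&: X != set0.

Lemma nmeet_map (V : finType) (I : Type) (e : {set V}) (F : I -> {set V}) (s : seq I) :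
  nmeet e [seq F i | i <- s] = \sum_(i <- s) meets e (F i).
Proof. by rewrite /nmeet count_map count_sum. Qed.

Section Coarsening.
Variables (V : finType) (E : hypergraph V) (p : nat).
Variables (Y : 'I_p -> {set V}) (W Z : {set V}).

Local Notation Ys := [seq Y i | i <- enum 'I_p].
Local Notation nY e := (\sum_(i < p) meets e (Y i)).
Local Notation weight e := (edge_weight (nY e) (meets e W)%N (meets e Z)%N).
Local Notation light e := (weight e == 1).

Definition light_load (i : 'I_p) : nat := \sum_(e <- E) light e * meets e (Y i).

Lemma nmeet_parts (e : {set V}) : nmeet e Ys = nY e.
Proof. by rewrite nmeet_map big_enum. Qed.

Lemma cost_alpha_beta_sum :
  cost E (Ys ++ [:: W; Z]) + alpha E Ys W Z + beta E Ys Z = \sum_(e <- E) weight e.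
Proof.
rewrite /cost /alpha /beta !count_sum -!big_split /=; apply: eq_bigr => e _.
rewrite /nmeet -cats1 !count_cat -/(nmeet e Ys) nmeet_parts /= -setI_eq0.
by rewrite /edge_weight /meets negbK !addn0 !addnA.
Qed.

Lemma sum_light_load : \sum_i light_load i <= \sum_(e <- E) light e.
Proof.
rewrite exchange_big /=; apply: leq_sum => e _; rewrite -big_distrr /=.
by case: (boolP (light e)) => [/light_edge_le1|]; rewrite ?mul1n ?mul0n.
Qed.

Lemma sum_light_load_in (S : {set 'I_p}) :
  \sum_(i in S) light_load i = \sum_(e <- E) light e * \sum_(i in S) meets e (Y i).
Proof. by rewrite exchange_big /=; apply: eq_bigr => e _; rewrite big_distrr. Qed.

Hypothesis coverYWZ : \bigcup_(X <- Ys ++ [:: W; Z]) X = [set: V].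

Lemma meets_outside_chosen (S : {set 'I_p}) (e : {set V}) :
  meets e (~: \bigcup_(i in S) Y i) ->
  [|| meets e W, meets e Z | \sum_(i in S) meets e (Y i) < nY e].
Proof.
case/set0Pn => x; rewrite !inE => /andP[xe xnS].
have : x \in [set: V] by [].
rewrite -coverYWZ big_cat big_map big_enum /= !big_cons big_nil !inE orbF.
have meets_x (X : {set V}) : x \in X -> meets e X.
  by move=> xX; apply/set0Pn; exists x; rewrite inE xe.
case/or3P => [/bigcupP[i _ xi] | /meets_x -> // | /meets_x ->]; last by rewrite orbT.
have iS : i \notin S by apply: contra xnS => iS; apply/bigcupP; exists i.
rewrite (bigID (mem S) xpredT) /= -[X in X < _]addn0 ltn_add2l.
by rewrite (bigD1 i) //= (meets_x (Y i)) // !orbT.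
Qed.

Lemma coarsening_cost (S : {set 'I_p}) :
  cost E ([seq Y (enum_val j) | j <- enum 'I_#|S|]
          ++ [:: ~: \bigcup_(j < #|S|) Y (enum_val j)])
  = \sum_(e <- E) (1 < \sum_(i in S) meets e (Y i) + meets e (~: \bigcup_(i in S) Y i)).
Proof.
rewrite /cost count_sum -(big_enum_val (A := mem S)) /=; apply: eq_bigr => e _.
rewrite /nmeet count_cat -/(nmeet _ _) nmeet_map big_enum /= addn0.
by rewrite [\sum_(i in S) _](big_enum_val (A := mem S)).
Qed.

Lemma coarsening_cost_le (S : {set 'I_p}) :
  2 * \sum_(i in S) light_load i <= \sum_i light_load i ->
  2 * cost E ([seq Y (enum_val j) | j <- enum 'I_#|S|]
              ++ [:: ~: \bigcup_(j < #|S|) Y (enum_val j)])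
  <= cost E (Ys ++ [:: W; Z]) + alpha E Ys W Z + beta E Ys Z.
Proof.
move=> halfS; rewrite coarsening_cost cost_alpha_beta_sum.
have crossing :
    \sum_(e <- E) (1 < \sum_(i in S) meets e (Y i) + meets e (~: \bigcup_(i in S) Y i))
    <= \sum_(e <- E) (weight e == 2) + \sum_(i in S) light_load i.
  rewrite sum_light_load_in -big_split; apply: leq_sum => e _.
  apply: refined_crossing_le; last exact: meets_outside_chosen.
  by rewrite [leqRHS](bigID (mem S)) leq_addr.
have weights :
    \sum_(e <- E) weight e = \sum_(e <- E) light e + 2 * \sum_(e <- E) (weight e == 2).
  by rewrite big_distrr -big_split; apply: eq_bigr => e _; apply: edge_weight_split.
have := sum_light_load; lia.
Qed.

End Coarsening.

Theorem lemma3p5 (V : finType) (E : hypergraph V) (k p : nat)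
  (Y : 'I_p -> {set V}) (W Z : {set V}) :
  2 <= k -> 2 * k - 2 <= p ->
  is_partition ([seq Y i | i <- enum 'I_p] ++ [:: W; Z]) ->
  exists f : 'I_(k.-1) -> 'I_p, injective f /\
    2 * cost E ([seq Y (f j) | j <- enum 'I_(k.-1)]
                 ++ [:: ~: \bigcup_(j < k.-1) Y (f j)])
    <= cost E ([seq Y i | i <- enum 'I_p] ++ [:: W; Z])
       + alpha E [seq Y i | i <- enum 'I_p] W Z
       + beta E [seq Y i | i <- enum 'I_p] Z.
Proof.
move=> _ p_ge [_ _ coverYWZ].
have [|S [_ cardS halfS]] :=
  exists_subset_half_sum (light_load E Y W Z) (m := k.-1) (A := [set: 'I_p]).
  by rewrite cardsT card_ord; lia.
rewrite -cardS; exists enum_val; split; first exact: enum_val_inj.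
apply: coarsening_cost_le => //.
by rewrite (eq_bigl _ _ (fun i => in_setT i)) in halfS.
Qed.
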